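(* Let $\hat{\mathbf Q}=\tilde{\mathbf Q}_{st}+\tilde{\mathbf Q}_{\mathcal I}\varepsilon$ be a $2\times2$ dual quaternion Hermitian matrix with $\tilde{\mathbf Q}_{st}=\begin{bmatrix} a&\tilde c\\ \tilde c^\ast&b\end{bmatrix}$, $\tilde c\ne0$. Let $\lambda_1,\lambda_2$ be the solutions of $(a-x)(b-x)=\tilde c^\ast\tilde c$, and let $\tilde{\mathbf U}$ be the unitary quaternion matrix $$\tilde{\mathbf U}=\begin{bmatrix}\frac{-\tilde c}{((a-\lambda_1)^2+\tilde c^\ast\tilde c)^{1/2}} & \frac{-\tilde c}{((a-\lambda_2)^2+\tilde c^\ast\tilde c)^{1/2}}\\ \frac{a-\lambda_1}{((a-\lambda_1)^2+\tilde c^\ast\tilde c)^{1/2}} & \frac{a-\lambda_2}{((a-\lambda_2)^2+\tilde c^\ast\tilde c)^{1/2}}\end{bmatrix},$$ which satisfies $\tilde{\mathbf U}^\ast\tilde{\mathbf Q}_{st}\tilde{\mathbf U}=\mathrm{diag}(\lambda_1,\lambda_2)$. Write $\tilde{\mathbf U}^\ast\tilde{\mathbf Q}_{\mathcal I}\tilde{\mathbf U}=\begin{bmatrix}x&\tilde z\\ \tilde z^\ast&y\end{bmatrix}$ and define $$\hat{\mathbf V}=\begin{bmatrix}1&\frac{\tilde z}{\lambda_2-\lambda_1}\varepsilon\\ \frac{\tilde z^\ast}{\lambda_1-\lambda_2}\varepsilon&1\end{bmatrix}.$$ Then $\hat{\mathbf V}^\ast\tilde{\mathbf U}^\ast\hat{\mathbf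 Q}^\ast\tilde{\mathbf U}\hat{\mathbf V}=\mathrm{diag}(\lambda_1+x\varepsilon,\lambda_2+y\varepsilon)$, which is a diagonal dual number matrix, and $\tilde{\mathbf U}\hat{\mathbf V}$ is a unitary dual quaternion matrix.
   Context: Quaternions $q=q_0+q_1\mathbf i+q_2\mathbf j+q_3\mathbf k$ (real $q_i$, Hamilton multiplication), conjugate $q^\ast=q_0-q_1\mathbf i-q_2\mathbf j-q_3\mathbf k$. A dual quaternion is $q_{st}+q_{\mathcal I}\varepsilon$ with quaternions $q_{st},q_{\mathcal I}$, where $\varepsilon$ commutes with quaternions, $\varepsilon\ne0$, $\varepsilon^2=0$; multiplication $(p_{st}+p_{\mathcal I}\varepsilon)(q_{st}+q_{\mathcal I}\varepsilon)=p_{st}q_{st}+(p_{st}q_{\mathcal I}+p_{\mathcal I}q_{st})\varepsilon$; conjugate $q_{st}^\ast+q_{\mathcal I}^\ast\varepsilon$. Dual numbers are dual quaternions with real standard and dual parts. A dual quaternion matrix is Hermitian if it equals its conjugate transpose and unitary if $\hat{\mathbf U}^\ast\hat{\mathbf U}=\hat{\mathbf U}\hat{\mathbf U}^\ast=\hat{\mathbf I}$. *)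

From HB Require Import structures.
From mathcomp Require Import all_boot all_order all_algebra.
Set Implicit Arguments. Unset Strict Implicit. Unset Printing Implicit Defensive.
Import Order.TTheory GRing.Theory Num.Theory.
Local Open Scope ring_scope.

Section Quat.
Variable R : rcfType.

(* q = q0 + q1 i + q2 j + q3 k *)
Record quat := Quat { q0 : R; q1 : R; q2 : R; q3 : R }.

Definition qreal (r : R) : quat := Quat r 0 0 0.
Definition qzero : quat := qreal 0.
Definition qone : quat := qreal 1.
Definition qadd (p q : quat) : quat :=
  Quat (q0 p + q0 q) (q1 p + q1 q) (q2 p + q2 q) (q3 p + q3 q).
Definition qopp (p : quat) : quat := Quat (- q0 p) (- q1 p) (- q2 p) (- q3 p).
Definition qmul (p q : quat) : quat :=
  Quat (q0 p * q0 q - q1 p * q1 q - q2 p * q2 q - q3 p * q3 q)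
       (q0 p * q1 q + q1 p * q0 q + q2 p * q3 q - q3 p * q2 q)
       (q0 p * q2 q - q1 p * q3 q + q2 p * q0 q + q3 p * q1 q)
       (q0 p * q3 q + q1 p * q2 q - q2 p * q1 q + q3 p * q0 q).
Definition qconj (p : quat) : quat := Quat (q0 p) (- q1 p) (- q2 p) (- q3 p).
Definition qscale (r : R) (p : quat) : quat := qmul (qreal r) p.

(* dual quaternions q_st + q_I eps *)
Record dquat := DQ { dst : quat; ddu : quat }.
Definition dqadd (p q : dquat) : dquat := DQ (qadd (dst p) (dst q)) (qadd (ddu p) (ddu q)).
Definition dqmul (p q : dquat) : dquat :=
  DQ (qmul (dst p) (dst q)) (qadd (qmul (dst p) (ddu q)) (qmul (ddu p) (dst q))).
Definition dqconj (p : dquat) : dquat := DQ (qconj (dst p)) (qconj (ddu p)).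
Definition dqzero : dquat := DQ qzero qzero.
Definition dqone : dquat := DQ qone qzero.
Definition dnum (r s : R) : dquat := DQ (qreal r) (qreal s).
Definition dq_of_q (p : quat) : dquat := DQ p qzero.
End Quat.

Record M2 (T : Type) := Mx2 { e11 : T; e12 : T; e21 : T; e22 : T }.

Definition m2map (T U : Type) (f : T -> U) (A : M2 T) : M2 U :=
  Mx2 (f (e11 A)) (f (e12 A)) (f (e21 A)) (f (e22 A)).
Definition m2mul (T : Type) (add mul : T -> T -> T) (A B : M2 T) : M2 T :=
  Mx2 (add (mul (e11 A) (e11 B)) (mul (e12 A) (e21 B)))
      (add (mul (e11 A) (e12 B)) (mul (e12 A) (e22 B)))
      (add (mul (e21 A) (e11 B)) (mul (e22 A) (e21 B)))
      (add (mul (e21 A) (e12 B)) (mul (e22 A) (e22 B))).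
Definition m2ct (T : Type) (cj : T -> T) (A : M2 T) : M2 T :=
  Mx2 (cj (e11 A)) (cj (e21 A)) (cj (e12 A)) (cj (e22 A)).

Section Mats.
Variable R : rcfType.
Definition qmx_mul := m2mul (@qadd R) (@qmul R).
Definition qmx_ct := m2ct (@qconj R).
Definition dqmx_mul := m2mul (@dqadd R) (@dqmul R).
Definition dqmx_ct := m2ct (@dqconj R).
Definition dqmx_one : M2 (dquat R) := Mx2 (dqone R) (dqzero R) (dqzero R) (dqone R).
Definition dqmx_diag (d1 d2 : dquat R) : M2 (dquat R) := Mx2 d1 (dqzero R) (dqzero R) d2.
Definition dqmx_hermitian (A : M2 (dquat R)) : Prop := dqmx_ct A = A.
Definition dqmx_unitary (A : M2 (dquat R)) : Prop :=
  dqmx_mul (dqmx_ct A) A = dqmx_one /\ dqmx_mul A (dqmx_ct A) = dqmx_one.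
Definition dqmx_of (S I : M2 (quat R)) : M2 (dquat R) :=
  Mx2 (DQ (e11 S) (e11 I)) (DQ (e12 S) (e12 I)) (DQ (e21 S) (e21 I)) (DQ (e22 S) (e22 I)).
Definition Umat (a : R) (c : quat R) (l1 l2 : R) : M2 (quat R) :=
  let n1 := Num.sqrt ((a - l1) ^+ 2 + q0 (qmul (qconj c) c)) in
  let n2 := Num.sqrt ((a - l2) ^+ 2 + q0 (qmul (qconj c) c)) in
  Mx2 (qscale n1^-1 (qopp c)) (qscale n2^-1 (qopp c))
      (qreal ((a - l1) / n1)) (qreal ((a - l2) / n2)).
End Mats.

From HB Require Import structures.
From mathcomp Require Import all_boot all_order all_algebra.
From mathcomp Require Import ring lra.
Import Order.TTheory GRing.Theory Num.Theory.
Local Open Scope ring_scope.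

(* Standard part: as λ1, λ2 are the two roots of (a - x)(b - x) = |c|^2, Vieta gives
   b = λ1 + λ2 - a and |c|^2 = (a - λ1)(λ2 - a) > 0, and with these two identities the
   columns of U are orthonormal eigenvectors of Q_st.
   Dual part: since ε^2 = 0, writing V = I + Wε with W skew-Hermitian makes UV unitary,
   and V^*(D + Mε)V = D + (M + DW + W^*D)ε for D = diag(λ1, λ2).  The off-diagonal entry
   of DW + W^*D is (λ1 - λ2) W12, so W12 = z/(λ2 - λ1) cancels the entry z of M. *)

Ltac entrywise :=
  repeat match goal with
  | A : M2 _ |- _ => destruct A
  | q : quat _ |- _ => destruct q
  | d : dquat _ |- _ => destruct d
  end;
  cbv beta iota zeta delta [qmx_mul qmx_ct dqmx_mul dqmx_ct dqmx_of m2mul m2ct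
    dqmul dqadd dqconj qmul qadd qconj qzero qone qreal qscale qopp
    e11 e12 e21 e22 q0 q1 q2 q3 dst ddu];
  repeat match goal with
  | |- Mx2 _ _ _ _ = Mx2 _ _ _ _ => f_equal
  | |- DQ _ _ = DQ _ _ => f_equal
  | |- Quat _ _ _ _ = Quat _ _ _ _ => f_equal
  end.

Section QuatMatrix.
Context {R : rcfType}.
Implicit Types (A B C D S T U W : M2 (quat R)) (c z : quat R).

Definition qmx_add A B : M2 (quat R) :=
  Mx2 (qadd (e11 A) (e11 B)) (qadd (e12 A) (e12 B))
      (qadd (e21 A) (e21 B)) (qadd (e22 A) (e22 B)).
Definition qmx_diag (r1 r2 : R) : M2 (quat R) :=
  Mx2 (qreal r1) (qzero R) (qzero R) (qreal r2).
Definition qmx_one : M2 (quat R) := qmx_diag 1 1.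
Definition qmx_zero : M2 (quat R) := qmx_diag 0 0.

Ltac qmx_entrywise := rewrite /qmx_add /qmx_one /qmx_zero /qmx_diag; entrywise; ring.

Lemma qmx_mulA A B C : qmx_mul A (qmx_mul B C) = qmx_mul (qmx_mul A B) C.
Proof. qmx_entrywise. Qed.
Lemma qmx_mul1m A : qmx_mul qmx_one A = A.
Proof. qmx_entrywise. Qed.
Lemma qmx_mulm1 A : qmx_mul A qmx_one = A.
Proof. qmx_entrywise. Qed.
Lemma qmx_mul0m A : qmx_mul qmx_zero A = qmx_zero.
Proof. qmx_entrywise. Qed.
Lemma qmx_mulm0 A : qmx_mul A qmx_zero = qmx_zero.
Proof. qmx_entrywise. Qed.
Lemma qmx_addm0 A : qmx_add A qmx_zero = A.
Proof. qmx_entrywise. Qed.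
Lemma qmx_addC A B : qmx_add A B = qmx_add B A.
Proof. qmx_entrywise. Qed.
Lemma qmx_mulDl A B C : qmx_mul (qmx_add A B) C = qmx_add (qmx_mul A C) (qmx_mul B C).
Proof. qmx_entrywise. Qed.
Lemma qmx_mulDr A B C : qmx_mul A (qmx_add B C) = qmx_add (qmx_mul A B) (qmx_mul A C).
Proof. qmx_entrywise. Qed.
Lemma qmx_ct_mul A B : qmx_ct (qmx_mul A B) = qmx_mul (qmx_ct B) (qmx_ct A).
Proof. qmx_entrywise. Qed.
Lemma qmx_ct_one : qmx_ct qmx_one = qmx_one.
Proof. qmx_entrywise. Qed.
Lemma qmx_ct_zero : qmx_ct qmx_zero = qmx_zero.
Proof. qmx_entrywise. Qed.
Lemma qmx_ctK A : qmx_ct (qmx_ct A) = A.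
Proof. qmx_entrywise. Qed.

Lemma dqmx_ofM A B C D :
  dqmx_mul (dqmx_of A C) (dqmx_of B D)
  = dqmx_of (qmx_mul A B) (qmx_add (qmx_mul A D) (qmx_mul C B)).
Proof. rewrite /qmx_add; entrywise; ring. Qed.

Lemma dqmx_of_ct A B : dqmx_ct (dqmx_of A B) = dqmx_of (qmx_ct A) (qmx_ct B).
Proof. by case: A; case: B. Qed.

Lemma dqmx_of_qmx U : m2map (@dq_of_q R) U = dqmx_of U qmx_zero.
Proof. by case: U. Qed.

Lemma dqmx_hermitian_dual {S T : M2 (quat R)} : dqmx_hermitian (dqmx_of S T) -> qmx_ct T = T.
Proof.
rewrite /dqmx_hermitian dqmx_of_ct => /(congr1 (m2map (@ddu R))).
by case: S; case: T.
Qed.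

Lemma dqmx_unitary_perturb U W :
  qmx_mul (qmx_ct U) U = qmx_one -> qmx_mul U (qmx_ct U) = qmx_one ->
  qmx_add W (qmx_ct W) = qmx_zero ->
  dqmx_unitary (dqmx_mul (dqmx_of U qmx_zero) (dqmx_of qmx_one W)).
Proof.
move=> UU UU' W_skew.
rewrite /dqmx_unitary dqmx_ofM dqmx_of_ct !dqmx_ofM qmx_mulm1 qmx_mul0m qmx_addm0.
have dqmx_oneE : dqmx_one R = dqmx_of qmx_one qmx_zero by [].
rewrite dqmx_oneE; split; congr (dqmx_of _ _) => //.
- by rewrite qmx_ct_mul qmx_mulA UU qmx_mul1m -qmx_mulA UU qmx_mulm1.
- by rewrite qmx_ct_mul qmx_mulA -qmx_mulDl -qmx_mulDr qmx_addC W_skew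
    qmx_mulm0 qmx_mul0m.
Qed.

Lemma dqmx_perturb_congr U W S T :
  let D := qmx_mul (qmx_ct U) (qmx_mul S U) in
  let M := qmx_mul (qmx_ct U) (qmx_mul T U) in
  dqmx_mul (dqmx_ct (dqmx_of qmx_one W))
    (dqmx_mul (dqmx_ct (dqmx_of U qmx_zero))
      (dqmx_mul (dqmx_of S T) (dqmx_mul (dqmx_of U qmx_zero) (dqmx_of qmx_one W))))
  = dqmx_of D (qmx_add (qmx_add (qmx_mul D W) M) (qmx_mul (qmx_ct W) D)).
Proof.
move=> D M; rewrite !dqmx_of_ct !dqmx_ofM qmx_ct_one qmx_ct_zero.
rewrite qmx_mulm1 qmx_mul0m qmx_addm0 !qmx_mul1m qmx_mul0m qmx_addm0.
by rewrite qmx_mulDr (qmx_mulA S) (qmx_mulA (qmx_ct U) (qmx_mul S U)).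
Qed.

Lemma qmx_hermitianE {A : M2 (quat R)} :
  qmx_ct A = A -> A = Mx2 (e11 A) (e12 A) (qconj (e12 A)) (e22 A).
Proof. by case: A => a11 a12 a21 a22 [_ _ <-]. Qed.

Definition sylvester_sol (l1 l2 : R) z : M2 (quat R) :=
  Mx2 (qzero R) (qscale (l2 - l1)^-1 z) (qscale (l1 - l2)^-1 (qconj z)) (qzero R).

Lemma sylvester_sol_skew (l1 l2 : R) z : l1 != l2 ->
  qmx_add (sylvester_sol l1 l2 z) (qmx_ct (sylvester_sol l1 l2 z)) = qmx_zero.
Proof.
move=> l12; have l1_l2 : l1 - l2 != 0 by rewrite subr_eq0.
have l2_l1 : l2 - l1 != 0 by rewrite subr_eq0 eq_sym.
rewrite /sylvester_sol /qmx_add /qmx_zero /qmx_diag; entrywise; field; by rewrite ?l1_l2 ?l2_l1.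
Qed.

Lemma sylvester_sol_diag (l1 l2 : R) x z y : l1 != l2 ->
  let D := qmx_diag l1 l2 in let W := sylvester_sol l1 l2 z in
  qmx_add (qmx_add (qmx_mul D W) (Mx2 x z (qconj z) y)) (qmx_mul (qmx_ct W) D)
  = Mx2 x (qzero R) (qzero R) y.
Proof.
move=> l12 D W; have l1_l2 : l1 - l2 != 0 by rewrite subr_eq0.
have l2_l1 : l2 - l1 != 0 by rewrite subr_eq0 eq_sym.
rewrite /D /W /sylvester_sol /qmx_add /qmx_diag; entrywise; field; by rewrite ?l1_l2 ?l2_l1.
Qed.

Definition qnorm2 c : R := q0 c ^+ 2 + q1 c ^+ 2 + q2 c ^+ 2 + q3 c ^+ 2.

Lemma qreal_inj : injective (@qreal R).
Proof. by move=> r s [->]. Qed.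

Lemma qconjMq c : qmul (qconj c) c = qreal (qnorm2 c).
Proof. rewrite /qnorm2; entrywise; ring. Qed.

Lemma qnorm2_gt0 c : c <> qzero R -> 0 < qnorm2 c.
Proof.
case: c => c0 c1 c2 c3 c_neq0; rewrite lt_def !addr_ge0 ?sqr_ge0 // andbT.
apply/eqP; rewrite /qnorm2 /= => n0; apply: c_neq0.
have sq0 (r : R) : r ^+ 2 = 0 -> r = 0 by move/eqP; rewrite sqrf_eq0 => /eqP.
move: (sqr_ge0 c0) (sqr_ge0 c1) (sqr_ge0 c2) (sqr_ge0 c3) => *.
have -> : c0 = 0 by apply: sq0; lra.
have -> : c1 = 0 by apply: sq0; lra.
have -> : c2 = 0 by apply: sq0; lra.
by have -> : c3 = 0 by apply: sq0; lra.
Qed.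

Lemma qscale0 c : qscale 0 c = qzero R.
Proof. entrywise; ring. Qed.

Definition qcols c (p1 p2 s1 s2 : R) : M2 (quat R) :=
  Mx2 (qscale s1 (qopp c)) (qscale s2 (qopp c)) (qreal (p1 * s1)) (qreal (p2 * s2)).

Lemma qcols_ctM c p1 p2 s1 s2 :
  let U := qcols c p1 p2 s1 s2 in let n := qnorm2 c in
  qmx_mul (qmx_ct U) U =
  Mx2 (qreal (s1 * s1 * (n + p1 * p1))) (qreal (s1 * s2 * (n + p1 * p2)))
      (qreal (s1 * s2 * (n + p1 * p2))) (qreal (s2 * s2 * (n + p2 * p2))).
Proof. rewrite /qcols /qnorm2; entrywise; ring. Qed.

Lemma qcols_mulct c p1 p2 s1 s2 :
  let U := qcols c p1 p2 s1 s2 in let r := - (p1 * (s1 * s1) + p2 * (s2 * s2)) in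
  qmx_mul U (qmx_ct U) =
  Mx2 (qreal (qnorm2 c * (s1 * s1 + s2 * s2))) (qscale r c) (qscale r (qconj c))
      (qreal (p1 * p1 * (s1 * s1) + p2 * p2 * (s2 * s2))).
Proof. rewrite /qcols /qnorm2; entrywise; ring. Qed.

Lemma qcols_ct_conj c p1 p2 s1 s2 (a b : R) :
  let U := qcols c p1 p2 s1 s2 in let n := qnorm2 c in
  let f p q := a * n - n * (p + q) + b * p * q in
  qmx_mul (qmx_ct U) (qmx_mul (Mx2 (qreal a) c (qconj c) (qreal b)) U) =
  Mx2 (qreal (s1 * s1 * f p1 p1)) (qreal (s1 * s2 * f p1 p2))
      (qreal (s1 * s2 * f p1 p2)) (qreal (s2 * s2 * f p2 p2)).
Proof. rewrite /qcols /qnorm2; entrywise; ring. Qed.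

Lemma inv_sqrt_sq (t : R) : 0 <= t -> (Num.sqrt t)^-1 * (Num.sqrt t)^-1 = t^-1.
Proof. by move=> t_ge0; rewrite -invfM -expr2 sqr_sqrtr. Qed.

Section Eigenbasis.
Context {a b l1 l2 : R} {c : quat R}.
Hypotheses (c_neq0 : c <> qzero R) (l12 : l1 != l2).
Hypotheses (char1 : (a - l1) * (b - l1) = qnorm2 c) (char2 : (a - l2) * (b - l2) = qnorm2 c).

Lemma eig_vieta : b = l1 + l2 - a.
Proof.
have : (l2 - l1) * (l1 + l2 - a - b) = (a - l2) * (b - l2) - (a - l1) * (b - l1).
  by ring.
rewrite char1 char2 subrr => /eqP; rewrite mulf_eq0 subr_eq0 eq_sym (negbTE l12) /=.
by move=> sum0; apply/eqP; rewrite eq_sym -subr_eq0.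
Qed.

Lemma qnorm2_eig : qnorm2 c = (a - l1) * (l2 - a).
Proof. by rewrite -char1 eig_vieta; ring. Qed.

Lemma eig_sub_neq0 : [/\ a - l1 != 0, a - l2 != 0, l1 - l2 != 0 & l2 - l1 != 0].
Proof.
have : (a - l1) * (a - l2) != 0.
  by rewrite -oppr_eq0 -mulrN opprB -qnorm2_eig gt_eqF // qnorm2_gt0.
rewrite mulf_eq0 negb_or => /andP[-> ->].
by rewrite !subr_eq0 l12 eq_sym l12.
Qed.

Ltac eig_field :=
  field; destruct eig_sub_neq0 as [n1 n2 n12 n21]; by rewrite ?n1 ?n2 ?n12 ?n21.

Let s1 := (Num.sqrt ((a - l1) ^+ 2 + qnorm2 c))^-1.
Let s2 := (Num.sqrt ((a - l2) ^+ 2 + qnorm2 c))^-1.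

Lemma Umat_qcols : Umat a c l1 l2 = qcols c (a - l1) (a - l2) s1 s2.
Proof. by rewrite /Umat qconjMq. Qed.

Lemma s1_sq : s1 * s1 = ((a - l1) * (l2 - l1))^-1.
Proof.
rewrite inv_sqrt_sq ?addr_ge0 ?sqr_ge0 ?ltW ?qnorm2_gt0 //.
by rewrite qnorm2_eig; congr (_^-1); ring.
Qed.

Lemma s2_sq : s2 * s2 = ((a - l2) * (l1 - l2))^-1.
Proof.
rewrite inv_sqrt_sq ?addr_ge0 ?sqr_ge0 ?ltW ?qnorm2_gt0 //.
by rewrite qnorm2_eig; congr (_^-1); ring.
Qed.

Lemma Umat_ctM : qmx_mul (qmx_ct (Umat a c l1 l2)) (Umat a c l1 l2) = qmx_one.
Proof.
rewrite Umat_qcols qcols_ctM s1_sq s2_sq qnorm2_eig.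
congr (Mx2 (qreal _) (qreal _) (qreal _) (qreal _)); [eig_field | ring | ring | eig_field].
Qed.

Lemma Umat_mulct : qmx_mul (Umat a c l1 l2) (qmx_ct (Umat a c l1 l2)) = qmx_one.
Proof.
rewrite Umat_qcols qcols_mulct s1_sq s2_sq qnorm2_eig.
have -> : - ((a - l1) * ((a - l1) * (l2 - l1))^-1 + (a - l2) * ((a - l2) * (l1 - l2))^-1) = 0.
  by eig_field.
rewrite !qscale0; congr (Mx2 (qreal _) _ _ (qreal _)); eig_field.
Qed.

Lemma Umat_diag :
  qmx_mul (qmx_ct (Umat a c l1 l2)) (qmx_mul (Mx2 (qreal a) c (qconj c) (qreal b)) (Umat a c l1 l2))
  = qmx_diag l1 l2.
Proof.
rewrite Umat_qcols qcols_ct_conj s1_sq s2_sq qnorm2_eig eig_vieta.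
congr (Mx2 (qreal _) (qreal _) (qreal _) (qreal _)); [eig_field | ring | ring | eig_field].
Qed.

End Eigenbasis.
End QuatMatrix.

Theorem proposition3p4 (R : rcfType) (a b : R) (c : quat R) (QI : M2 (quat R))
    (l1 l2 : R) :
  let Qst := Mx2 (qreal a) c (qconj c) (qreal b) in
  let Q := dqmx_of Qst QI in
  dqmx_hermitian Q ->
  c <> qzero R ->
  qreal ((a - l1) * (b - l1)) = qmul (qconj c) c ->
  qreal ((a - l2) * (b - l2)) = qmul (qconj c) c ->
  l1 != l2 ->
  let U := Umat a c l1 l2 in
  let M := qmx_mul (qmx_ct U) (qmx_mul QI U) in
  let x := e11 M in let z := e12 M in let y := e22 M in
  let V := Mx2 (dqone R) (DQ (qzero R) (qscale (l2 - l1)^-1 z))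
               (DQ (qzero R) (qscale (l1 - l2)^-1 (qconj z))) (dqone R) in
  let Uh := m2map (@dq_of_q R) U in
  dqmx_mul (dqmx_ct V) (dqmx_mul (dqmx_ct Uh) (dqmx_mul (dqmx_ct Q) (dqmx_mul Uh V)))
    = dqmx_diag (DQ (qreal l1) x) (DQ (qreal l2) y)
  /\ dqmx_unitary (dqmx_mul Uh V).
Proof.
move=> Qst Q Q_herm c_neq0 + + l12 U M x z y V Uh.
rewrite qconjMq => /qreal_inj char1 /qreal_inj char2.
have M_herm : qmx_ct M = M.
  by rewrite /M !qmx_ct_mul qmx_ctK (dqmx_hermitian_dual Q_herm) qmx_mulA.
have -> : V = dqmx_of qmx_one (sylvester_sol l1 l2 z) by [].
rewrite Q_herm /Uh dqmx_of_qmx; split.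
- rewrite dqmx_perturb_congr (Umat_diag c_neq0 l12 char1 char2) -/M.
  by rewrite (qmx_hermitianE M_herm) sylvester_sol_diag.
- apply: dqmx_unitary_perturb; last exact: sylvester_sol_skew.
  + exact: Umat_ctM c_neq0 l12 char1 char2.
  + exact: Umat_mulct c_neq0 l12 char1 char2.
Qed.
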